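(* Let $M=\{0,1\}$ be the commutative monoid under multiplication. Then the simplicial set $K(M,2)$ is not a Skvortsov–Shehtman complex; specifically, it fails the Beck–Chevalley condition $\mathrm{BC}_{0,3}[5]$.
   Context: For a commutative monoid $M$ (written multiplicatively), $K(M,2)$ is the simplicial set whose $n$-simplices are families $(a_{ijk})_{0\le i<j<k\le n}$ of elements of $M$ satisfying $a_{ikl}a_{ijk}=a_{ijl}a_{jkl}$ for all $0\le i<j<k<l\le n$; the $j$-th face map omits all entries involving the index $j$ (and reindexes), and the $j$-th degeneracy map repeats the index $j$, inserting the unit of $M$ at the new entries. The Beck–Chevalley condition $\mathrm{BC}_{p,q}[n]$ ($n>1$, $0\le p<q\le n$) on a simplicial set $S$: for any $(n-1)$-simplices $c_p,c_q$ of $S$ with $d_pc_q=d_{q-1}c_p$ there exists an $n$-simplex $x$ of $S$ with $d_px=c_p$ and $d_qx=c_q$. $S$ is a Skvortsov–Shehtman complex if it satisfies all $\mathrm{BC}_{p,q}[n]$. *)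

From mathcomp Require Import all_boot.
Set Implicit Arguments. Unset Strict Implicit. Unset Printing Implicit Defensive.

(* An n-simplex is a family
   (a_{ijk})_{0<=i<j<k<=n}; we represent a family by a function
   nat -> nat -> nat -> M, only its values on 0<=i<j<k<=n being relevant,
   and compare n-families by agreement on those indices. *)
Definition family (M : Type) := nat -> nat -> nat -> M.

Definition fam_eq (M : Type) (n : nat) (a b : family M) : Prop :=
  forall i j k, i < j -> j < k -> k <= n -> a i j k = b i j k.

Definition is_simplex (M : Type) (mul : M -> M -> M) (n : nat) (a : family M) : Prop :=
  forall i j k l, i < j -> j < k -> k < l -> l <= n ->
    mul (a i k l) (a i j k) = mul (a i j l) (a j k l).

Definition delta (j i : nat) : nat := if i < j then i else i.+1.

Definition face (M : Type) (j : nat) (a : family M) : family M :=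
  fun i k l => a (delta j i) (delta j k) (delta j l).

Definition BC (M : Type) (mul : M -> M -> M) (n p q : nat) : Prop :=
  forall cp cq : family M,
    is_simplex mul n.-1 cp -> is_simplex mul n.-1 cq ->
    fam_eq n.-2 (face p cq) (face q.-1 cp) ->
    exists x : family M, is_simplex mul n x /\
      fam_eq n.-1 (face p x) cp /\ fam_eq n.-1 (face q x) cq.

Definition SS_complex (M : Type) (mul : M -> M -> M) : Prop :=
  forall n p q, 1 < n -> p < q -> q <= n -> BC mul n p q.

(* A filler x with d0 x = c0 and d3 x = c3 has
   x015 = x135 = 1 and x024 = x234 = 1, so its cocycle relations at (0,1,3,5) and
   (0,2,3,4) force x013 = x034 = 1; but its relation at (0,1,3,4) reads
   x034 x013 = x014 x134 = 1 * 0. *)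
From mathcomp Require Import all_boot zify.

Section Decidability.

Variable M : eqType.

Definition upto (n : nat) : seq nat := iota 0 n.+1.

Lemma mem_upto n i : (i \in upto n) = (i <= n).
Proof. by rewrite mem_iota add0n ltnS. Qed.

Definition simplexb (mul : M -> M -> M) (n : nat) (a : family M) : bool :=
  all (fun i => all (fun j => all (fun k => all (fun l =>
    [&& i < j, j < k, k < l & l <= n] ==>
      (mul (a i k l) (a i j k) == mul (a i j l) (a j k l)))
  (upto n)) (upto n)) (upto n)) (upto n).

Lemma simplexP mul n a : reflect (is_simplex mul n a) (simplexb mul n a).
Proof.
apply: (iffP allP) => [ha i j k l ij jk kl ln | ha i _].
  have [in_i in_j in_k in_l] :
      [/\ i \in upto n, j \in upto n, k \in upto n & l \in upto n].
    by rewrite !mem_upto; split; lia.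
  move: (ha i in_i) => /allP /(_ j in_j) /allP /(_ k in_k) /allP /(_ l in_l).
  move=> /implyP.
  by rewrite ij jk kl ln => /(_ isT) /eqP.
apply/allP => j _; apply/allP => k _; apply/allP => l _.
by apply/implyP => /and4P [ij jk kl ln]; apply/eqP; apply: ha.
Qed.

Definition fam_eqb (n : nat) (a b : family M) : bool :=
  all (fun i => all (fun j => all (fun k =>
    [&& i < j, j < k & k <= n] ==> (a i j k == b i j k))
  (upto n)) (upto n)) (upto n).

Lemma fam_eqP n a b : reflect (fam_eq n a b) (fam_eqb n a b).
Proof.
apply: (iffP allP) => [hab i j k ij jk kn | hab i _].
  have [in_i in_j in_k] : [/\ i \in upto n, j \in upto n & k \in upto n].
    by rewrite !mem_upto; split; lia.
  move: (hab i in_i) => /allP /(_ j in_j) /allP /(_ k in_k) /implyP.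
  by rewrite ij jk kn => /(_ isT) /eqP.
apply/allP => j _; apply/allP => k _.
by apply/implyP => /and3P [ij jk kn]; apply/eqP; apply: hab.
Qed.

End Decidability.

Definition c0 : family bool := fun i j k =>
  (i, j, k) \in [:: (0, 2, 4); (1, 2, 3); (1, 2, 4)].

Definition c3 : family bool := fun i j k =>
  (i, j, k) \in [:: (0, 1, 3); (0, 1, 4); (0, 2, 3); (0, 2, 4)].

Lemma c0_simplex : is_simplex andb 4 c0.
Proof. by apply/simplexP; vm_compute. Qed.

Lemma c3_simplex : is_simplex andb 4 c3.
Proof. by apply/simplexP; vm_compute. Qed.

Lemma c0_c3_compatible : fam_eq 3 (face 0 c3) (face 2 c0).
Proof. by apply/fam_eqP; vm_compute. Qed.

Lemma no_filler_c0_c3 (x : family bool) :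
  is_simplex andb 5 x -> fam_eq 4 (face 0 x) c0 -> fam_eq 4 (face 3 x) c3 ->
  False.
Proof.
move=> hx h0 h3.
have x134 : x 1 3 4 = false := h0 0 2 3 erefl erefl erefl.
have x135 : x 1 3 5 = true := h0 0 2 4 erefl erefl erefl.
have x234 : x 2 3 4 = true := h0 1 2 3 erefl erefl erefl.
have x014 : x 0 1 4 = true := h3 0 1 3 erefl erefl erefl.
have x015 : x 0 1 5 = true := h3 0 1 4 erefl erefl erefl.
have x024 : x 0 2 4 = true := h3 0 2 3 erefl erefl erefl.
have x013 : x 0 1 3 = true.
  by have := hx 0 1 3 5 isT isT isT isT; rewrite x015 x135 => /andP [].
have x034 : x 0 3 4 = true.
  by have := hx 0 2 3 4 isT isT isT isT; rewrite x024 x234 => /andP [].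
by have := hx 0 1 3 4 isT isT isT isT; rewrite x034 x013 x014 x134.
Qed.

Lemma not_BC_5_0_3 : ~ BC andb 5 0 3.
Proof.
move=> bc.
have [x [hx [h0 h3]]] := bc c0 c3 c0_simplex c3_simplex c0_c3_compatible.
exact: no_filler_c0_c3 hx h0 h3.
Qed.

(* M = {0,1} under multiplication, modelled as bool with andb (true = 1). *)
Theorem mainTheorem2 : ~ SS_complex andb /\ ~ BC andb 5 0 3.
Proof.
split; last exact: not_BC_5_0_3.
by move=> ss; apply: not_BC_5_0_3; apply: ss.
Qed.
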